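(* Let $d\ge2$ be an integer and $g(b,x):=b^d\big(\frac{1+x+x^2}{1+b+bx}\big)^d$ for $0\le b,x\le1$. For $b\in(0,1]$, the map $x\mapsto g(b,x)$ is increasing and convex on $(0,1]$ and has a unique fixed point $c_0=c_0(b)$ in $(0,1)$. Moreover, writing $g_b(x)=g(b,x)$, for every fixed $b\in(0,1]$ and every $0\le c<1$ the iterates $g_b^{(i)}(c)$ converge to $c_0(b)$ as $i\to\infty$. Also, $g_b(x)>x$ if and only if $x<c_0(b)$. *)

From Stdlib Require Import Reals Lra Lia.
Open Scope R_scope.

Definition g (d : nat) (b x : R) : R :=
  b ^ d * ((1 + x + x ^ 2) / (1 + b + b * x)) ^ d.

Definition strictly_increasing_on_0_1 (f : R -> R) : Prop :=
  forall x y, 0 < x -> x < y -> y <= 1 -> f x < f y.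

Definition convex_on_0_1 (f : R -> R) : Prop :=
  forall x y t, 0 < x <= 1 -> 0 < y <= 1 -> 0 <= t <= 1 ->
    f (t * x + (1 - t) * y) <= t * f x + (1 - t) * f y.

(* Write g(b, x) = h(x)^d with
     h(x) = b (1 + x + x^2) / (1 + b + b x) = x - 1/b + (b^2 + b + 1) / (b (1 + b + b x)).
   On [0, oo) the map h is positive, increasing and convex (a line plus a positive
   multiple of the reciprocal of a positive affine map), hence so is g_b = h^d.
   Then g_b(x) - x is convex, positive at 0, negative at 9/10 and nonpositive at 1,
   so it has a single zero c0 in (0, 1), being positive before c0 and negative after.
   An orbit of the increasing map g_b started on one side of c0 is monotone and
   bounded by c0, so it converges to a fixed point of g_b, which can only be c0. *)

From Stdlib Require Import Reals Lra Lia Ranalysis5.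
Open Scope R_scope.

Definition convex_on (D : R -> Prop) (f : R -> R) : Prop :=
  forall x y t, D x -> D y -> 0 <= t <= 1 ->
    f (t * x + (1 - t) * y) <= t * f x + (1 - t) * f y.

Lemma convex_on_chord D f x y z : convex_on D f -> D x -> D z -> x < y < z ->
  (z - x) * f y <= (z - y) * f x + (y - x) * f z.
Proof.
  intros Hf Hx Hz Hy.
  set (t := (z - y) / (z - x)).
  assert (Et : t * (z - x) = z - y) by (unfold t; field; lra).
  assert (Ht : 0 <= t <= 1) by (split; nra).
  assert (Ey : y = t * x + (1 - t) * z) by (unfold t; field; lra).
  apply Rle_trans with ((z - x) * (t * f x + (1 - t) * f z)).
  - apply Rmult_le_compat_l; [lra|]. rewrite Ey at 1. apply Hf; assumption.
  - right. unfold t. field. lra.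
Qed.

Lemma Rinv_convex : convex_on (Rlt 0) Rinv.
Proof.
  intros u v t Hu Hv Ht.
  set (w := t * u + (1 - t) * v).
  assert (Hw : 0 < w) by (unfold w; nra).
  assert (E : t * / u + (1 - t) * / v - / w = t * (1 - t) * (u - v) ^ 2 / (u * v * w))
    by (unfold w in *; field; repeat split; lra).
  assert (0 <= t * (1 - t) * (u - v) ^ 2 / (u * v * w)).
  { apply Rle_mult_inv_pos.
    - apply Rmult_le_pos; [nra | apply pow2_ge_0].
    - apply Rmult_lt_0_compat; [apply Rmult_lt_0_compat|]; assumption. }
  lra.
Qed.

Lemma pow_convex n : convex_on (Rle 0) (fun x => x ^ n).
Proof.
  intros a c t Ha Hc Ht. induction n as [|n IH]; simpl; [lra|].
  (* Chebyshev: [a - c] and [a ^ n - c ^ n] have the same sign. *)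
  assert (Hcheb : 0 <= (a - c) * (a ^ n - c ^ n)).
  { destruct (Rle_dec a c).
    - assert (a ^ n <= c ^ n) by (apply pow_incr; lra). nra.
    - assert (c ^ n <= a ^ n) by (apply pow_incr; lra). nra. }
  apply Rle_trans with ((t * a + (1 - t) * c) * (t * a ^ n + (1 - t) * c ^ n)).
  - apply Rmult_le_compat_l; [nra | exact IH].
  - assert (E : t * (a * a ^ n) + (1 - t) * (c * c ^ n)
                - (t * a + (1 - t) * c) * (t * a ^ n + (1 - t) * c ^ n)
                = t * (1 - t) * ((a - c) * (a ^ n - c ^ n))) by ring.
    assert (0 <= t * (1 - t)) by nra.
    nra.
Qed.

Lemma pow_lt_compat_l x y n : 0 <= x < y -> n <> 0%nat -> x ^ n < y ^ n.
Proof.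
  intros Hxy Hn. destruct n as [|n]; [lia|]. clear Hn.
  induction n as [|n IH]; [simpl; lra|].
  change (x * x ^ S n < y * y ^ S n).
  pose proof (pow_le x (S n) (proj1 Hxy)). nra.
Qed.

Lemma convex_sign_change phi a p c :
  a < p < c -> convex_on (fun x => a <= x <= c) phi ->
  (forall x, a <= x <= p -> continuity_pt phi x) ->
  0 < phi a -> phi p < 0 -> phi c <= 0 ->
  {z | a < z < p /\ phi z = 0 /\
       (forall x, a <= x < z -> 0 < phi x) /\ (forall x, z < x < c -> phi x < 0)}.
Proof.
  intros Hapc Hconv Hcont Ha Hp Hc.
  destruct (IVT_interv (fun x => - phi x) a p) as [z [Hz Hz0]].
  - intros x Hx. apply continuity_pt_opp, Hcont, Hx.
  - lra.
  - lra.
  - lra.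
  - assert (Hphiz : phi z = 0) by lra.
    assert (Haz : a < z) by (destruct (Req_dec z a) as [->|]; lra).
    assert (Hzp : z < p) by (destruct (Req_dec z p) as [->|]; lra).
    exists z. repeat split; try lra.
    + intros x Hx.
      pose proof (convex_on_chord _ _ x z p Hconv ltac:(lra) ltac:(lra) ltac:(lra)).
      nra.
    + intros x Hx. destruct (Rtotal_order x p) as [Hxp|[->|Hxp]]; [| lra |].
      * pose proof (convex_on_chord _ _ z x p Hconv ltac:(lra) ltac:(lra) ltac:(lra)).
        nra.
      * pose proof (convex_on_chord _ _ p x c Hconv ltac:(lra) ltac:(lra) ltac:(lra)).
        nra.
Qed.

Lemma Un_cv_const c : Un_cv (fun _ => c) c.
Proof.
  intros e He. exists 0%nat. intros n _.
  unfold Rdist, Rminus. rewrite Rplus_opp_r, Rabs_R0. exact He.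
Qed.

Lemma orbit_limit_fixed f u L : (forall n, u (S n) = f (u n)) ->
  Un_cv u L -> continuity_pt f L -> f L = L.
Proof.
  intros Hu HL Hf. apply (UL_sequence (fun n => u (n + 1)%nat)).
  - apply Un_cv_ext with (fun n => f (u n)).
    + intro n. rewrite Nat.add_1_r. symmetry. apply Hu.
    + apply continuity_seq; assumption.
  - apply CV_shift'. exact HL.
Qed.

Section MonotoneOrbit.

Variables (f : R -> R) (lo hi : R).
Hypothesis f_nondecreasing : forall x y, lo <= x -> x <= y -> y <= hi -> f x <= f y.
Hypothesis f_continuous : forall x, lo <= x <= hi -> continuity_pt f x.

Lemma orbit_cv_up : lo <= hi -> f hi = hi -> (forall x, lo <= x < hi -> x < f x) ->
  Un_cv (fun i => Nat.iter i f lo) hi.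
Proof.
  intros Hle Hfix Hup. set (u := fun i => Nat.iter i f lo).
  assert (Hstep : forall x, lo <= x <= hi -> x <= f x <= hi).
  { intros x Hx. split.
    - destruct (Req_dec x hi) as [->|Hne]; [lra|]. left. apply Hup. lra.
    - rewrite <- Hfix. apply f_nondecreasing; lra. }
  assert (Hu : forall n, lo <= u n <= hi).
  { induction n as [|n IH]; [simpl; lra|].
    change (u (S n)) with (f (u n)). pose proof (Hstep _ IH). lra. }
  assert (Hgrow : Un_growing u) by (intro n; exact (proj1 (Hstep _ (Hu n)))).
  destruct (growing_cv u Hgrow) as [L HL].
  { exists hi. intros x [n ->]. apply Hu. }
  assert (HLlo : lo <= L) by exact (growing_ineq u L Hgrow HL 0).
  assert (HLhi : L <= hi) by exact (Rle_cv_lim (fun n => proj2 (Hu n)) HL (Un_cv_const hi)).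
  assert (HfL : f L = L).
  { apply (orbit_limit_fixed f u); [reflexivity | exact HL | apply f_continuous; lra]. }
  destruct (Req_dec L hi) as [<-|Hne]; [exact HL|].
  pose proof (Hup L ltac:(lra)). lra.
Qed.

Lemma orbit_cv_down : lo <= hi -> f lo = lo -> (forall x, lo < x <= hi -> f x < x) ->
  Un_cv (fun i => Nat.iter i f hi) lo.
Proof.
  intros Hle Hfix Hdown. set (u := fun i => Nat.iter i f hi).
  assert (Hstep : forall x, lo <= x <= hi -> lo <= f x <= x).
  { intros x Hx. split.
    - rewrite <- Hfix at 1. apply f_nondecreasing; lra.
    - destruct (Req_dec x lo) as [->|Hne]; [lra|]. left. apply Hdown. lra. }
  assert (Hu : forall n, lo <= u n <= hi).
  { induction n as [|n IH]; [simpl; lra|].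
    change (u (S n)) with (f (u n)). pose proof (Hstep _ IH). lra. }
  assert (Hdecr : Un_decreasing u) by (intro n; exact (proj2 (Hstep _ (Hu n)))).
  destruct (decreasing_cv u Hdecr) as [L HL].
  { exists (- lo). intros x [n ->]. unfold opp_seq. pose proof (Hu n). lra. }
  assert (HLhi : L <= hi) by exact (decreasing_ineq u L Hdecr HL 0).
  assert (HLlo : lo <= L) by exact (Rle_cv_lim (fun n => proj1 (Hu n)) (Un_cv_const lo) HL).
  assert (HfL : f L = L).
  { apply (orbit_limit_fixed f u); [reflexivity | exact HL | apply f_continuous; lra]. }
  destruct (Req_dec L lo) as [<-|Hne]; [exact HL|].
  pose proof (Hdown L ltac:(lra)). lra.
Qed.

End MonotoneOrbit.

Definition gbase (b x : R) : R := b * (1 + x + x ^ 2) / (1 + b + b * x).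

Section G.

Variables (d : nat) (b : R).
Hypothesis b_pos : 0 < b.

Lemma g_pow_gbase x : 0 <= x -> g d b x = gbase b x ^ d.
Proof. intros Hx. unfold g, gbase. rewrite <- Rpow_mult_distr. f_equal. field. nra. Qed.

Lemma gbase_pos x : 0 <= x -> 0 < gbase b x.
Proof. intros Hx. unfold gbase. apply Rdiv_lt_0_compat; nra. Qed.

Lemma gbase_lt x y : 0 <= x -> x < y -> gbase b x < gbase b y.
Proof.
  intros Hx Hxy. unfold gbase. apply Rlt_0_minus.
  replace (b * (1 + y + y ^ 2) / (1 + b + b * y) - b * (1 + x + x ^ 2) / (1 + b + b * x))
    with (b * (y - x) * (1 + (1 + b) * (x + y) + b * x * y)
          / ((1 + b + b * y) * (1 + b + b * x)))
    by (field; split; nra).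
  apply Rdiv_lt_0_compat.
  - assert (0 <= b * x * y) by (apply Rmult_le_pos; [apply Rmult_le_pos|]; lra).
    assert (0 <= (1 + b) * (x + y)) by (apply Rmult_le_pos; lra).
    apply Rmult_lt_0_compat; [nra | lra].
  - apply Rmult_lt_0_compat; nra.
Qed.

Lemma gbase_decomp x : 0 <= x ->
  gbase b x = x - / b + (b * b + b + 1) / b * / (1 + b + b * x).
Proof. intros Hx. unfold gbase. field. split; nra. Qed.

Lemma gbase_convex : convex_on (Rle 0) (gbase b).
Proof.
  intros x y t Hx Hy Ht.
  assert (Hz : 0 <= t * x + (1 - t) * y) by nra.
  rewrite !gbase_decomp by assumption.
  replace (1 + b + b * (t * x + (1 - t) * y))
    with (t * (1 + b + b * x) + (1 - t) * (1 + b + b * y)) by ring.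
  set (K := (b * b + b + 1) / b).
  assert (HK : 0 < K) by (apply Rdiv_lt_0_compat; nra).
  pose proof (Rinv_convex (1 + b + b * x) (1 + b + b * y) t ltac:(nra) ltac:(nra) Ht)
    as Hinv.
  pose proof (Rmult_le_compat_l K _ _ (Rlt_le _ _ HK) Hinv).
  lra.
Qed.

Lemma g_lt x y : (d <> 0)%nat -> 0 <= x -> x < y -> g d b x < g d b y.
Proof.
  intros Hd Hx Hxy. rewrite !g_pow_gbase by lra.
  apply pow_lt_compat_l; [|exact Hd].
  split; [left; apply gbase_pos | apply gbase_lt]; assumption.
Qed.

Lemma g_le x y : (d <> 0)%nat -> 0 <= x -> x <= y -> g d b x <= g d b y.
Proof.
  intros Hd Hx Hxy. destruct (Req_dec x y) as [->|Hne]; [lra|].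
  left. apply g_lt; [exact Hd | lra | lra].
Qed.

Lemma g_convex : convex_on (Rle 0) (g d b).
Proof.
  intros x y t Hx Hy Ht.
  assert (Hz : 0 <= t * x + (1 - t) * y) by nra.
  rewrite !g_pow_gbase by assumption.
  apply Rle_trans with ((t * gbase b x + (1 - t) * gbase b y) ^ d).
  - apply pow_incr. split; [left; apply gbase_pos, Hz | apply gbase_convex; assumption].
  - apply pow_convex; [left; apply gbase_pos; assumption .. | exact Ht].
Qed.

Lemma g_continuity x : 0 <= x -> continuity_pt (g d b) x.
Proof. intros Hx. unfold g. reg. nra. Qed.

Lemma g_0_pos : 0 < g d b 0.
Proof. rewrite g_pow_gbase by lra. apply pow_lt, gbase_pos. lra. Qed.

Lemma g_1_le_1 : b <= 1 -> g d b 1 <= 1.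
Proof.
  intros Hb1. rewrite g_pow_gbase by lra.
  apply Rle_trans with (1 ^ d); [|rewrite pow1; lra].
  apply pow_incr. split; [left; apply gbase_pos; lra|].
  unfold gbase. apply Rmult_le_reg_r with (1 + b + b * 1); [lra|].
  unfold Rdiv. rewrite Rmult_assoc, Rinv_l by lra. lra.
Qed.

(* [gbase b (9/10) <= gbase 1 (9/10) = 271/290] and [(271/290)^2 < 9/10]. *)
Lemma g_9_10_lt : (2 <= d)%nat -> b <= 1 -> g d b (9/10) < 9/10.
Proof.
  intros Hd Hb1. rewrite g_pow_gbase by lra.
  assert (Hpos : 0 < gbase b (9/10)) by (apply gbase_pos; lra).
  assert (Hle : gbase b (9/10) <= 271/290).
  { unfold gbase. apply Rmult_le_reg_r with (1 + b + b * (9/10)); [lra|].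
    unfold Rdiv. rewrite Rmult_assoc, Rinv_l by lra. nra. }
  replace d with (2 + (d - 2))%nat by lia. rewrite pow_add.
  assert (0 <= gbase b (9/10) ^ (d - 2) <= 1).
  { split; [apply pow_le; lra|].
    apply Rle_trans with (1 ^ (d - 2)); [apply pow_incr; lra | rewrite pow1; lra]. }
  assert (gbase b (9/10) ^ 2 < 9/10) by (simpl; nra).
  assert (0 <= gbase b (9/10) ^ 2) by (apply pow_le; lra).
  nra.
Qed.

End G.

Lemma g_fixed_point d b : (2 <= d)%nat -> 0 < b <= 1 ->
  {c0 | 0 < c0 < 1 /\ g d b c0 = c0 /\
        (forall x, 0 <= x < c0 -> x < g d b x) /\ (forall x, c0 < x < 1 -> g d b x < x)}.
Proof.
  intros Hd Hb.
  destruct (convex_sign_change (fun x => g d b x - x) 0 (9/10) 1)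
    as [c0 [Hc0 [Hfix [Hbelow Habove]]]].
  - lra.
  - intros x y t Hx Hy Ht.
    pose proof (g_convex d b ltac:(lra) x y t ltac:(red; lra) ltac:(red; lra) Ht). lra.
  - intros x Hx. unfold g. reg. nra.
  - pose proof (g_0_pos d b ltac:(lra)). lra.
  - pose proof (g_9_10_lt d b ltac:(lra) Hd ltac:(lra)). lra.
  - pose proof (g_1_le_1 d b ltac:(lra) ltac:(lra)). lra.
  - exists c0. repeat split; try lra.
    + intros x Hx. pose proof (Hbelow x Hx). lra.
    + intros x Hx. pose proof (Habove x Hx). lra.
Qed.

Theorem lemma6p1 (d : nat) (hd : (2 <= d)%nat) (b : R) (hb : 0 < b <= 1) :
  strictly_increasing_on_0_1 (g d b) /\
  convex_on_0_1 (g d b) /\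
  exists c0 : R,
    (0 < c0 < 1 /\ g d b c0 = c0) /\
    (forall c', 0 < c' < 1 -> g d b c' = c' -> c' = c0) /\
    (forall c, 0 <= c < 1 -> Un_cv (fun i => Nat.iter i (g d b) c) c0) /\
    (forall x, 0 <= x <= 1 -> (g d b x > x <-> x < c0)).
Proof.
  assert (Hb0 : 0 < b) by lra.
  assert (Hd0 : (d <> 0)%nat) by lia.
  destruct (g_fixed_point d b hd hb) as [c0 [Hc0 [Hfix [Hbelow Habove]]]].
  split; [intros x y Hx Hxy Hy; apply (g_lt d b Hb0 x y Hd0); lra|].
  split.
  { intros x y t Hx Hy Ht. apply g_convex; [exact Hb0 | red; lra | red; lra | exact Ht]. }
  exists c0. split; [split; assumption|]. split; [|split].
  - intros c' Hc' Hfix'. destruct (Rtotal_order c' c0) as [H|[H|H]]; [| exact H |].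
    + pose proof (Hbelow c' ltac:(lra)). lra.
    + pose proof (Habove c' ltac:(lra)). lra.
  - intros c Hc. destruct (Rle_lt_dec c c0) as [Hle|Hlt].
    + apply orbit_cv_up; try assumption.
      * intros x y Hx Hxy Hy. apply (g_le d b Hb0 x y Hd0); lra.
      * intros x Hx. apply g_continuity; lra.
      * intros x Hx. apply Hbelow. lra.
    + apply orbit_cv_down; try (assumption || lra).
      * intros x y Hx Hxy Hy. apply (g_le d b Hb0 x y Hd0); lra.
      * intros x Hx. apply g_continuity; lra.
      * intros x Hx. apply Habove. lra.
  - intros x Hx. pose proof (g_1_le_1 d b Hb0 (proj2 hb)) as Hg1.
    destruct (Rtotal_order x c0) as [H|[H|H]].
    + pose proof (Hbelow x ltac:(lra)). lra.
    + subst x. lra.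
    + destruct (Req_dec x 1) as [->|Hne]; [lra|].
      pose proof (Habove x ltac:(lra)). lra.
Qed.
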